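(* Let $d\ge2$ be an integer, $B>1$ and $0<s<1$. Then $$\sup_{1\le\alpha_1\le\cdots\le\alpha_{d-1}\le B}\min\Big\{\alpha_1^{-s},\ \big(\alpha_1^{1-s}\alpha_2^{-s}\big)^{1/2},\ \dots,\ \big(\alpha_{k-1}^{1-s}\alpha_k^{-s}\big)^{1/k},\ \dots,\ \big(\alpha_{d-1}^{1-s}B^{-s}\big)^{1/d}\Big\}=B^{-g_d(s)},$$ where the terms in the minimum are $\alpha_1^{-s}$, the terms $(\alpha_{k-1}^{1-s}\alpha_k^{-s})^{1/k}$ for $2\le k\le d-1$, and $(\alpha_{d-1}^{1-s}B^{-s})^{1/d}$; moreover the supremum is attained at the point where all the terms in the minimum are equal.
   Context: Functions $g_n:[0,1]\to\mathbb R$: $g_1(s)=s$, $g_n(s)=\frac{s\,g_{n-1}(s)}{1-s+n\,g_{n-1}(s)}$ for $n\ge2$. *)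

From Stdlib Require Import Reals List Lra Lia.
Open Scope R_scope.

(* g_1(s) = s, g_n(s) = s g_{n-1}(s) / (1 - s + n g_{n-1}(s)) for n >= 2.
   (g_0 is a junk value, never used.) *)
Fixpoint g (n : nat) (s : R) : R :=
  match n with
  | O => s
  | S m =>
      match m with
      | O => s
      | S _ => s * g m s / (1 - s + INR n * g m s)
      end
  end.

(* Feasible points: alpha_1, ..., alpha_{d-1} (indices 1..d-1 of alpha : nat -> R)
   with 1 <= alpha_1 <= ... <= alpha_{d-1} <= B. *)
Definition feasible (d : nat) (B : R) (alpha : nat -> R) : Prop :=
  1 <= alpha 1%nat /\
  (forall k : nat, (1 <= k)%nat -> (k < d - 1)%nat -> alpha k <= alpha (S k)) /\
  alpha (d - 1)%nat <= B.

Definition ext (d : nat) (B : R) (alpha : nat -> R) (k : nat) : R :=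
  if Nat.eqb k d then B else alpha k.

Definition term (d : nat) (B s : R) (alpha : nat -> R) (k : nat) : R :=
  match k with
  | O => 0
  | S O => Rpower (ext d B alpha 1%nat) (- s)
  | S j => Rpower (Rpower (ext d B alpha j) (1 - s) * Rpower (ext d B alpha k) (- s))
                  (1 / INR k)
  end.

Definition minTerms (d : nat) (B s : R) (alpha : nat -> R) : R :=
  fold_right Rmin (term d B s alpha 1%nat)
             (map (term d B s alpha) (seq 2 (d - 1))).

From Stdlib Require Import Reals List Lra Lia.
Open Scope R_scope.

(* Pass to logarithms: with X_0 = 0, X_j = ln alpha_j and X_d = ln B,
   the k-th term of the minimum is exp(L_{k-1} / k), where
   L_j = (1-s) X_j - s X_{j+1}.  Let h_n = 1 / g_n; it satisfies the linear
   recurrence h_0 = 0, s h_{n+1} = (1-s) h_n + (n+1), and is positive and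
   nondecreasing.  A discrete comparison argument shows that if m (k+1) <= L_k
   for all k < n then X_n <= -m h_n (and symmetrically for >=).  Applied to
   m = log of the minimum, with X_d = ln B, this gives the upper bound
   minTerms <= exp(-ln B / h_d) = B^{-g_d(s)} for EVERY alpha; when all terms are
   equal both inequalities hold, forcing equality.  Finally the point
   alpha_k = B^{h_k / h_d} is feasible (by monotonicity of h) and makes all
   terms equal, so the bound is attained and is the supremum. *)

Section Recurrence.

Variable s : R.
Hypothesis Hs : 0 < s < 1.

(* h s n = 1 / g n s: the reciprocal of g, which obeys a linear recurrence. *)
Fixpoint h (n : nat) : R :=
  match n with
  | O => 0
  | S m => ((1 - s) * h m + INR (S m)) / s
  end.

Lemma h_succ (n : nat) : s * h (S n) = (1 - s) * h n + INR (S n).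
Proof. change (h (S n)) with (((1 - s) * h n + INR (S n)) / s); field; lra. Qed.

Lemma h_nonneg (n : nat) : 0 <= h n.
Proof.
  induction n as [|n IH]; [simpl; lra|].
  assert (E := h_succ n). pose proof (pos_INR (S n)).
  assert (0 <= (1 - s) * h n) by (apply Rmult_le_pos; lra).
  nra.
Qed.

Lemma h_pos (n : nat) : (1 <= n)%nat -> 0 < h n.
Proof.
  intros Hn; destruct n as [|n]; [lia|].
  assert (E := h_succ n). pose proof (h_nonneg n).
  assert (0 < INR (S n)) by (apply lt_0_INR; lia).
  assert (0 <= (1 - s) * h n) by (apply Rmult_le_pos; lra).
  nra.
Qed.

(* An a priori bound controlling the growth of h, needed for monotonicity. *)
Lemma h_growth_bound (n : nat) : (2 * s - 1) * h n <= INR n.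
Proof.
  induction n as [|n IH]; [simpl; lra|].
  assert (E := h_succ n). rewrite S_INR in *.
  assert ((1 - s) * ((2 * s - 1) * h n) <= (1 - s) * INR n)
    by (apply Rmult_le_compat_l; lra).
  apply Rmult_le_reg_l with s; [lra|]. nra.
Qed.

Lemma h_le_succ (n : nat) : h n <= h (S n).
Proof.
  assert (E := h_succ n). pose proof (h_growth_bound n).
  rewrite S_INR in E. apply Rmult_le_reg_l with s; lra.
Qed.

Lemma h_monotone (i j : nat) : (i <= j)%nat -> h i <= h j.
Proof.
  induction 1 as [|j _ IH]; [lra|]. pose proof (h_le_succ j); lra.
Qed.

Lemma g_inv_h (n : nat) : (1 <= n)%nat -> g n s = / h n.
Proof.
  intros Hn; destruct n as [|n]; [lia|]; clear Hn.
  induction n as [|n IH]; [simpl; field; lra|].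
  change (g (S (S n)) s) with (s * g (S n) s / (1 - s + INR (S (S n)) * g (S n) s)).
  rewrite IH. pose proof (h_pos (S n) ltac:(lia)).
  assert (0 < INR (S (S n))) by (apply lt_0_INR; lia).
  assert (0 <= (1 - s) * h (S n)) by (apply Rmult_le_pos; lra).
  change (h (S (S n))) with (((1 - s) * h (S n) + INR (S (S n))) / s).
  field; repeat split; lra.
Qed.

(* Discrete comparison: if the "defects" (1-s) X_k - s X_{k+1} are at least
   m (k+1), then X_n is at most the solution -m h_n of the equality case. *)
Lemma comparison_le (m : R) (X : nat -> R) (n : nat) : X O = 0 ->
  (forall k, (k < n)%nat -> m * INR (S k) <= (1 - s) * X k - s * X (S k)) ->
  X n <= - m * h n.
Proof.
  intros H0 Hdef. induction n as [|n IH]; [simpl; lra|].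
  assert (Hn : X n <= - m * h n) by (apply IH; intros; apply Hdef; lia).
  specialize (Hdef n ltac:(lia)). assert (E := h_succ n).
  assert ((1 - s) * X n <= (1 - s) * (- m * h n)) by (apply Rmult_le_compat_l; lra).
  apply Rmult_le_reg_l with s; [lra|]. nra.
Qed.

Lemma comparison_ge (m : R) (X : nat -> R) (n : nat) : X O = 0 ->
  (forall k, (k < n)%nat -> (1 - s) * X k - s * X (S k) <= m * INR (S k)) ->
  - m * h n <= X n.
Proof.
  intros H0 Hdef.
  assert (H := comparison_le (- m) (fun k => - X k) n ltac:(cbv beta; rewrite H0; lra)
                 ltac:(intros k Hk; specialize (Hdef k Hk); cbv beta; lra)).
  cbv beta in H; lra.
Qed.

End Recurrence.

Lemma exp_le_iff (x y : R) : exp x <= exp y <-> x <= y.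
Proof.
  split; intros H.
  - destruct (Rle_or_lt x y) as [|Hlt]; [auto|]. apply exp_increasing in Hlt; lra.
  - destruct H as [Hlt|<-]; [left; now apply exp_increasing|lra].
Qed.

Lemma fold_min_le (l : list R) (a : R) :
  fold_right Rmin a l <= a /\ forall y, In y l -> fold_right Rmin a l <= y.
Proof.
  induction l as [|b l [IHa IHl]]; simpl; [split; [lra|tauto]|].
  pose proof (Rmin_l b (fold_right Rmin a l)).
  pose proof (Rmin_r b (fold_right Rmin a l)).
  split; [lra|]. intros y [<-|Hy]; [lra|]. specialize (IHl y Hy); lra.
Qed.

Lemma fold_min_in (l : list R) (a : R) :
  fold_right Rmin a l = a \/ In (fold_right Rmin a l) l.
Proof.
  induction l as [|b l IH]; simpl; [auto|].
  destruct (Rle_dec b (fold_right Rmin a l)).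
  - rewrite Rmin_left by auto. right; left; auto.
  - rewrite Rmin_right by lra. destruct IH; auto.
Qed.

Lemma minTerms_le_term (d : nat) (B s : R) (alpha : nat -> R) (k : nat) :
  (1 <= k <= d)%nat -> minTerms d B s alpha <= term d B s alpha k.
Proof.
  intros Hk. unfold minTerms.
  destruct (fold_min_le (map (term d B s alpha) (seq 2 (d - 1))) (term d B s alpha 1%nat))
    as [Hhead Hall].
  destruct (Nat.eq_dec k 1) as [->|Hne]; [auto|].
  apply Hall, in_map, in_seq; lia.
Qed.

Lemma minTerms_is_term (d : nat) (B s : R) (alpha : nat -> R) : (1 <= d)%nat ->
  exists k, (1 <= k <= d)%nat /\ minTerms d B s alpha = term d B s alpha k.
Proof.
  intros Hd. unfold minTerms.
  destruct (fold_min_in (map (term d B s alpha) (seq 2 (d - 1))) (term d B s alpha 1%nat))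
    as [H|H]; [exists 1%nat; split; [lia|auto]|].
  apply in_map_iff in H. destruct H as [k [Hk Hin]]. apply in_seq in Hin.
  exists k; split; [lia|auto].
Qed.

Definition logcoord (d : nat) (B : R) (alpha : nat -> R) (j : nat) : R :=
  match j with O => 0 | _ => ln (ext d B alpha j) end.

Lemma logcoord_last (d : nat) (B : R) (alpha : nat -> R) :
  (1 <= d)%nat -> logcoord d B alpha d = ln B.
Proof.
  intros Hd; destruct d as [|d]; [lia|].
  unfold logcoord, ext. now rewrite Nat.eqb_refl.
Qed.

(* The exponent of term (j+1), times (j+1): (1-s) X_j - s X_{j+1}. *)
Definition defect (d : nat) (B s : R) (alpha : nat -> R) (j : nat) : R :=
  (1 - s) * logcoord d B alpha j - s * logcoord d B alpha (S j).

Lemma term_exp (d : nat) (B s : R) (alpha : nat -> R) (j : nat) :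
  term d B s alpha (S j) = exp (defect d B s alpha j / INR (S j)).
Proof.
  unfold defect, logcoord.
  destruct j as [|j]; unfold term, Rpower.
  - change (INR 1) with 1. f_equal; field.
  - rewrite <- exp_plus, ln_exp. f_equal. field. apply not_0_INR; lia.
Qed.

Lemma target_exp (d : nat) (B s : R) : (1 <= d)%nat -> 0 < s < 1 ->
  Rpower B (- g d s) = exp (- (ln B / h s d)).
Proof.
  intros Hd Hs. pose proof (h_pos s Hs d Hd).
  unfold Rpower. rewrite (g_inv_h s Hs d Hd). f_equal. field. lra.
Qed.

Lemma defect_bound (d : nat) (B s : R) (alpha : nat -> R) (m : R) :
  (1 <= d)%nat -> 0 < s < 1 ->
  (forall k, (k < d)%nat -> m * INR (S k) <= defect d B s alpha k) ->
  m <= - (ln B / h s d).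
Proof.
  intros Hd Hs Hdef. pose proof (h_pos s Hs d Hd) as Hh.
  assert (Hcmp := comparison_le s Hs m (logcoord d B alpha) d eq_refl Hdef).
  rewrite logcoord_last in Hcmp by auto.
  apply Rmult_le_reg_r with (h s d); [lra|].
  replace (- (ln B / h s d) * h s d) with (- ln B) by (field; lra). lra.
Qed.

Lemma minTerms_upper (d : nat) (B s : R) (alpha : nat -> R) :
  (1 <= d)%nat -> 0 < s < 1 -> minTerms d B s alpha <= Rpower B (- g d s).
Proof.
  intros Hd Hs. rewrite target_exp by auto.
  destruct (minTerms_is_term d B s alpha Hd) as [[|k0] [Hk0 Hmin]]; [lia|].
  rewrite Hmin, term_exp, exp_le_iff.
  apply defect_bound with alpha; auto.
  intros k Hk. assert (0 < INR (S k)) by (apply lt_0_INR; lia).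
  assert (Hle := minTerms_le_term d B s alpha (S k) ltac:(lia)).
  rewrite Hmin, !term_exp in Hle. rewrite exp_le_iff in Hle.
  apply Rmult_le_compat_r with (r := INR (S k)) in Hle; [|lra].
  replace (defect d B s alpha k / INR (S k) * INR (S k)) with (defect d B s alpha k)
    in Hle by (field; lra).
  lra.
Qed.

Lemma minTerms_equal_terms (d : nat) (B s : R) (alpha : nat -> R) :
  (1 <= d)%nat -> 0 < s < 1 ->
  (forall k j : nat, (1 <= k <= d)%nat -> (1 <= j <= d)%nat ->
     term d B s alpha k = term d B s alpha j) ->
  minTerms d B s alpha = Rpower B (- g d s).
Proof.
  intros Hd Hs Heq. pose proof (h_pos s Hs d Hd) as Hh.
  rewrite target_exp by auto.
  set (m := defect d B s alpha 0 / INR 1).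
  assert (Hdef : forall k, (k < d)%nat -> defect d B s alpha k = m * INR (S k)).
  { intros k Hk. assert (0 < INR (S k)) by (apply lt_0_INR; lia).
    assert (Hk1 := Heq (S k) 1%nat ltac:(lia) ltac:(lia)).
    rewrite !term_exp in Hk1. apply exp_inv in Hk1. fold m in Hk1.
    rewrite <- Hk1. field. lra. }
  unfold defect in Hdef.
  assert (Hle := comparison_le s Hs m (logcoord d B alpha) d eq_refl
                   ltac:(intros k Hk; rewrite (Hdef k Hk); lra)).
  assert (Hge := comparison_ge s Hs m (logcoord d B alpha) d eq_refl
                   ltac:(intros k Hk; rewrite (Hdef k Hk); lra)).
  rewrite logcoord_last in Hle, Hge by auto.
  destruct (minTerms_is_term d B s alpha Hd) as [k0 [Hk0 Hmin]].
  rewrite Hmin, (Heq k0 1%nat Hk0 ltac:(lia)), term_exp. f_equal. fold m.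
  replace (ln B) with (- m * h s d) by lra. field. lra.
Qed.

(* The extremal point alpha_k = B^{h_k / h_d}; its log coordinates are
   proportional to h, so all defects are proportional to k (recurrence for h). *)
Definition equal_point (d : nat) (B s : R) (k : nat) : R :=
  exp (ln B * h s k / h s d).

Lemma logcoord_equal_point (d : nat) (B s : R) (k : nat) :
  (1 <= d)%nat -> 0 < s < 1 -> (k <= d)%nat ->
  logcoord d B (equal_point d B s) k = ln B * h s k / h s d.
Proof.
  intros Hd Hs Hk. pose proof (h_pos s Hs d Hd) as Hh.
  destruct k as [|k]; [simpl; field; lra|].
  unfold logcoord, ext. destruct (Nat.eqb_spec (S k) d) as [<-|_].
  - field; lra.
  - apply ln_exp.
Qed.

Lemma equal_point_feasible (d : nat) (B s : R) :
  (1 <= d)%nat -> 1 <= B -> 0 < s < 1 -> feasible d B (equal_point d B s).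
Proof.
  intros Hd HB Hs. pose proof (h_pos s Hs d Hd) as Hh.
  assert (HlnB : 0 <= ln B).
  { rewrite <- ln_1. destruct HB as [HB|<-]; [left; apply ln_increasing; lra|lra]. }
  (* B^t is nondecreasing in t, and equals 1 at t = 0 and B at t = 1 *)
  assert (Hmono : forall i j, (i <= j)%nat -> equal_point d B s i <= equal_point d B s j).
  { intros i j Hij. unfold equal_point. apply exp_le_iff.
    unfold Rdiv. apply Rmult_le_compat_r; [left; now apply Rinv_0_lt_compat|].
    apply Rmult_le_compat_l; [lra|]. now apply h_monotone. }
  assert (H0 : equal_point d B s 0 = 1) by (unfold equal_point; simpl h;
    replace (ln B * 0 / h s d) with 0 by (field; lra); apply exp_0).
  assert (Hd' : equal_point d B s d = B) by (unfold equal_point;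
    replace (ln B * h s d / h s d) with (ln B) by (field; lra); apply exp_ln; lra).
  split; [|split].
  - rewrite <- H0. apply Hmono; lia.
  - intros k _ _. apply Hmono; lia.
  - rewrite <- Hd' at 2. apply Hmono; lia.
Qed.

Lemma equal_point_terms (d : nat) (B s : R) (k : nat) :
  (1 <= d)%nat -> 0 < s < 1 -> (1 <= k <= d)%nat ->
  term d B s (equal_point d B s) k = exp (- (ln B / h s d)).
Proof.
  intros Hd Hs Hk. pose proof (h_pos s Hs d Hd) as Hh.
  destruct k as [|k]; [lia|].
  rewrite term_exp. unfold defect. rewrite !logcoord_equal_point by (assumption || lia).
  f_equal. assert (E := h_succ s Hs k).
  assert (0 < INR (S k)) by (apply lt_0_INR; lia).
  replace ((1 - s) * (ln B * h s k / h s d) - s * (ln B * h s (S k) / h s d))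
    with (ln B / h s d * ((1 - s) * h s k - s * h s (S k))) by (field; lra).
  rewrite E. field. lra.
Qed.

Theorem proposition2p8 (d : nat) (B s : R) :
  (2 <= d)%nat -> 1 < B -> 0 < s < 1 ->
  (* the supremum over feasible points of the minimum equals B^{-g_d(s)} *)
  is_lub (fun y => exists alpha, feasible d B alpha /\ y = minTerms d B s alpha)
         (Rpower B (- g d s)) /\
  (* it is attained at the point where all the terms are equal: such a point
     exists, and at every such point the minimum equals the supremum *)
  (exists alpha, feasible d B alpha /\
     (forall k j : nat, (1 <= k <= d)%nat -> (1 <= j <= d)%nat ->
        term d B s alpha k = term d B s alpha j)) /\
  (forall alpha, feasible d B alpha ->
     (forall k j : nat, (1 <= k <= d)%nat -> (1 <= j <= d)%nat ->
        term d B s alpha k = term d B s alpha j) ->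
     minTerms d B s alpha = Rpower B (- g d s)).
Proof.
  intros Hd HB Hs.
  assert (Hd1 : (1 <= d)%nat) by lia.
  assert (Hequal : forall k j : nat, (1 <= k <= d)%nat -> (1 <= j <= d)%nat ->
    term d B s (equal_point d B s) k = term d B s (equal_point d B s) j)
    by (intros k j Hk Hj; now rewrite !equal_point_terms).
  assert (Hfeas := equal_point_feasible d B s Hd1 ltac:(lra) Hs).
  split; [split|split].
  - intros y [alpha [_ ->]]. now apply minTerms_upper.
  - intros b Hb. apply Hb. exists (equal_point d B s). split; [auto|].
    symmetry. now apply minTerms_equal_terms.
  - exists (equal_point d B s); auto.
  - intros alpha _ Heq. now apply minTerms_equal_terms.
Qed.
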